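(* Suppose that for every integer $n \geq 3$ and every convex polygon $P \subset \mathbb{R}^2$ with $n$ vertices, the slack matrix $S_P$ satisfies $\operatorname{rank}_+(S_P) \leq \left\lfloor \frac{n+6}{2} \right\rfloor$. Then every nonnegative matrix $X \in \mathbb{R}^{m \times n}_+$ with $\operatorname{rank}(X) = 3$ satisfies \[ \operatorname{rank}_+(X) \; \leq \; \left\lfloor \frac{\min(m,n)+6}{2} \right\rfloor . \]
   Context: For a nonnegative matrix $X \in \mathbb{R}^{m\times n}_+$, the nonnegative rank $\operatorname{rank}_+(X)$ is the smallest integer $r$ such that there exist $W \in \mathbb{R}^{m\times r}_+$ and $H \in \mathbb{R}^{r\times n}_+$ with $X = WH$. The slack matrix of a polytope $P = \{x \in \mathbb{R}^k : A(i,:)x \leq b_i,\ 1\le i\le m\}$ (facet description with $m$ facets) with vertices $v_1,\dots,v_n$ is the $m\times n$ nonnegative matrix with entries $b_i - A(i,:)v_j$ (the slack of vertex $j$ with respect to facet $i$). $\lfloor x \rfloor$ denotes the largest integer not exceeding $x$. *)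

From HB Require Import structures.
From mathcomp Require Import all_boot all_order all_algebra.
From mathcomp Require Import boolp reals.
Set Implicit Arguments. Unset Strict Implicit. Unset Printing Implicit Defensive.
Import Order.TTheory GRing.Theory Num.Theory.
Local Open Scope ring_scope.

Section Defs.
Variable R : realType.

Definition nonneg_mx (m n : nat) (X : 'M[R]_(m, n)) : Prop :=
  forall i j, 0 <= X i j.

Definition nonneg_fact (m n : nat) (X : 'M[R]_(m, n)) (r : nat) : Prop :=
  exists (W : 'M[R]_(m, r)) (H : 'M[R]_(r, n)),
    [/\ nonneg_mx W, nonneg_mx H & X = W *m H].

(* nonnegative rank: the least r admitting a nonnegative factorization
   (set to 0, arbitrarily, if no such r exists, i.e. X is not nonnegative) *)
Definition nonneg_rank (m n : nat) (X : 'M[R]_(m, n)) : nat :=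
  match pselect (exists r, nonneg_fact X r) with
  | left ex =>
      let ex' : exists r, `[< nonneg_fact X r >] :=
        let: ex_intro r h := ex in ex_intro _ r (asboolT h) in
      ex_minn ex'
  | right _ => 0%N
  end.

Definition in_conv_of (n : nat) (v : 'I_n -> 'cV[R]_2) (P : pred 'I_n)
    (x : 'cV[R]_2) : Prop :=
  exists lam : 'I_n -> R,
    [/\ forall j, 0 <= lam j, forall j, ~~ P j -> lam j = 0,
        \sum_j lam j = 1 & x = \sum_j lam j *: v j].

(* P = conv(v_1..v_n) is a convex polygon whose vertices are exactly the
   (pairwise distinct) points v_1, ..., v_n: each v_j is an extreme point,
   i.e. not a convex combination of the other v_k. *)
Definition convex_polygon_vertices (n : nat) (v : 'I_n -> 'cV[R]_2) : Prop :=
  (3 <= n)%N /\ forall j, ~ in_conv_of v (fun k => k != j) (v j).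

Definition tight_set (m n : nat) (A : 'M[R]_(m, 2)) (b : 'cV[R]_m)
    (v : 'I_n -> 'cV[R]_2) (i : 'I_m) : {set 'I_n} :=
  [set j | (A *m v j) i 0 == b i 0].

(* (A, b) is a facet description of P = conv(v): P = {x | A x <= b},
   every inequality defines a facet (an edge, i.e. a face containing exactly
   two vertices of the polygon), and distinct inequalities define distinct
   facets. *)
Definition facet_description (m n : nat) (A : 'M[R]_(m, 2)) (b : 'cV[R]_m)
    (v : 'I_n -> 'cV[R]_2) : Prop :=
  [/\ forall x : 'cV[R]_2,
        in_conv_of v predT x <-> (forall i, (A *m x) i 0 <= b i 0),
      forall i, #|tight_set A b v i| = 2%N
    & forall i i', tight_set A b v i = tight_set A b v i' -> i = i'].

Definition slack_matrix (m n : nat) (A : 'M[R]_(m, 2)) (b : 'cV[R]_m)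
    (v : 'I_n -> 'cV[R]_2) : 'M[R]_(m, n) :=
  \matrix_(i < m, j < n) (b i 0 - (A *m v j) i 0).

End Defs.

(* A column that is a nonnegative combination
   of the others can be deleted without changing the nonnegative rank.  If
   there is none, the rank-3 factorisation lets us write
   X i j = s_j (a_i z_j.1 + b_i z_j.2 + c_i) with column sums s_j > 0, and the
   points z_j are then the vertices of a convex polygon P.  Each row of X is an
   affine function that is nonnegative on P, hence (affine Farkas lemma on P) a
   nonnegative combination of the facet inequalities of P.  Thus X factors as
   Lam S_P D with Lam, D nonnegative, and rank_+ X <= rank_+ S_P <= (n+6)/2.
   Transposing handles the case m <= n. *)

From HB Require Import structures.
From mathcomp Require Import all_boot all_order all_algebra fingroup perm.
From mathcomp Require Import boolp reals ring lra zify.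
Set Implicit Arguments. Unset Strict Implicit. Unset Printing Implicit Defensive.
Import Order.TTheory GRing.Theory Num.Theory.
Local Open Scope ring_scope.

Section Orientation.
Variable R : realFieldType.
Implicit Types a b c o p q r x y : R * R.

Definition orient a b c := (b.1 - a.1) * (c.2 - a.2) - (b.2 - a.2) * (c.1 - a.1).

Lemma orient_rot a b c : orient a b c = orient b c a.
Proof. rewrite /orient; ring. Qed.

Lemma orient_swap a b c : orient a b c = - orient a c b.
Proof. rewrite /orient; ring. Qed.

Lemma orient_self_l a b : orient a b a = 0.
Proof. rewrite /orient; ring. Qed.

Lemma orient_self_r a b : orient a b b = 0.
Proof. rewrite /orient; ring. Qed.

Lemma orient_affine a b y :
  orient a b y = (a.2 - b.2) * y.1 + (b.1 - a.1) * y.2 + (a.1 * b.2 - a.2 * b.1).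
Proof. rewrite /orient; ring. Qed.

Lemma barycentric p q r x : orient p q r != 0 ->
  let D := orient p q r in
  [/\ orient q r x / D + orient r p x / D + orient p q x / D = 1,
      x.1 = orient q r x / D * p.1 + orient r p x / D * q.1 + orient p q x / D * r.1 &
      x.2 = orient q r x / D * p.2 + orient r p x / D * q.2 + orient p q x / D * r.2].
Proof.
move: p q r x => [p1 p2] [q1 q2] [r1 r2] [x1 x2] /= hD; rewrite /orient /= in hD *.
by split; field.
Qed.

(* Seen from a lexicographically least point [o], the other points lie in a
   half-plane, on which the angular order given by [orient o] is a strict
   total order. *)
Definition lex_lt o a := (o.1 < a.1) || ((o.1 == a.1) && (o.2 < a.2)).

Lemma lex_orient_trans o a b c : lex_lt o a -> lex_lt o b -> lex_lt o c ->
  0 < orient o a b -> 0 < orient o b c -> 0 < orient o a c.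
Proof.
move=> ha hb hc hab hbc; rewrite ltNge; apply/negP => hac.
(* The vectors [a - o], [b - o], [c - o] satisfy a linear relation whose
   coefficients are their orientations; in the half-plane, [orient o a c <= 0]
   makes its first or second coordinate impossible. *)
have e1 : orient o a b * (c.1 - o.1) + orient o b c * (a.1 - o.1)
          - orient o a c * (b.1 - o.1) = 0 by rewrite /orient; ring.
have e2 : orient o a b * (c.2 - o.2) + orient o b c * (a.2 - o.2)
          - orient o a c * (b.2 - o.2) = 0 by rewrite /orient; ring.
move: e1 e2 hab hbc hac; move: (orient o a b) (orient o b c) (orient o a c) => al be ga.
move: ha hb hc; rewrite /lex_lt.
case/orP=> [ha|/andP[/eqP ha1 ha2]]; case/orP=> [hb|/andP[/eqP hb1 hb2]];
  case/orP=> [hc|/andP[/eqP hc1 hc2]] e1 e2 hal hbe hga; rewrite -?ha1 -?hb1 -?hc1 in e1 e2;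
  move: hga; rewrite le_eqVlt => /orP[/eqP g0|hga]; rewrite ?g0 in e1 e2; nra.
Qed.

Lemma lex_orient_eq0 o a b : lex_lt o a -> lex_lt o b -> orient o a b = 0 ->
  exists t, [/\ 0 <= t, t <= 1 &
    (b.1 = (1 - t) * o.1 + t * a.1 /\ b.2 = (1 - t) * o.2 + t * a.2) \/
    (a.1 = (1 - t) * o.1 + t * b.1 /\ a.2 = (1 - t) * o.2 + t * b.2)].
Proof.
move: o a b => [o1 o2] [a1 a2] [b1 b2]; rewrite /lex_lt /orient /=.
have ratio (x y : R) : 0 < x -> 0 < y -> exists t, [/\ 0 <= t, t <= 1 &
    (y = t * x) \/ (x = t * y)].
  move=> hx hy; case: (lerP y x) => hyx.
  - exists (y / x); split; first by rewrite divr_ge0 ?ltW.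
      by rewrite ler_pdivrMr // mul1r.
    by left; rewrite divfK ?gt_eqF.
  - exists (x / y); split; first by rewrite divr_ge0 ?ltW.
      by rewrite ler_pdivrMr // mul1r ltW.
    by right; rewrite divfK ?gt_eqF.
case/orP=> [ha|/andP[/eqP ha1 ha2]]; case/orP=> [hb|/andP[/eqP hb1 hb2]] h0.
- have := ratio (a1 - o1) (b1 - o1); rewrite !subr_gt0 => /(_ ha hb) [t [t0 t1 [e|e]]];
    exists t; split=> //.
  + left; split; first lra.
    have : (a1 - o1) * (b2 - o2 - t * (a2 - o2)) = 0 by rewrite e in h0; lra.
    by move/eqP; rewrite mulf_eq0 subr_eq0 (gt_eqF ha) /= => /eqP; lra.
  + right; split; first lra.
    have : (b1 - o1) * (a2 - o2 - t * (b2 - o2)) = 0 by rewrite e in h0; lra.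
    by move/eqP; rewrite mulf_eq0 subr_eq0 (gt_eqF hb) /= => /eqP; lra.
- by rewrite -hb1 in h0; nra.
- by rewrite -ha1 in h0; nra.
- have := ratio (a2 - o2) (b2 - o2); rewrite !subr_gt0 => /(_ ha2 hb2) [t [t0 t1 [e|e]]];
    by rewrite -ha1 -hb1; exists t; split=> //; (left; split; lra) || (right; split; lra).
Qed.

End Orientation.

Lemma sumr_delta (R : pzSemiRingType) n (p : 'I_n) (F : 'I_n -> R) :
  \sum_j (j == p)%:R * F j = F p.
Proof. by rewrite (bigD1 p) //= eqxx mul1r big1 ?addr0 // => j /negbTE ->; rewrite mul0r. Qed.

Section Hull.
Variables (R : realFieldType) (n : nat) (z : 'I_n -> R * R).

Definition in_hull (P : pred 'I_n) (x : R * R) :=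
  exists lam : 'I_n -> R, [/\ forall j, 0 <= lam j, forall j, ~~ P j -> lam j = 0,
     \sum_j lam j = 1, x.1 = \sum_j lam j * (z j).1 & x.2 = \sum_j lam j * (z j).2].

Definition extreme := forall j, ~ in_hull (fun k => k != j) (z j).

Lemma in_hull3 (P : pred 'I_n) (p q r : 'I_n) (A B C : R) x :
  P p -> P q -> P r -> 0 <= A -> 0 <= B -> 0 <= C -> A + B + C = 1 ->
  x.1 = A * (z p).1 + B * (z q).1 + C * (z r).1 ->
  x.2 = A * (z p).2 + B * (z q).2 + C * (z r).2 -> in_hull P x.
Proof.
move=> Pp Pq Pr hA hB hC hs h1 h2.
pose lam j := A * (j == p)%:R + B * (j == q)%:R + C * (j == r)%:R.
have sum_lam F : \sum_j lam j * F j = A * F p + B * F q + C * F r.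
  under eq_bigr do rewrite !mulrDl -!mulrA.
  by rewrite !big_split -!big_distrr /= !sumr_delta.
exists lam; split; rewrite ?sum_lam //.
- by move=> j; rewrite !addr_ge0 ?mulr_ge0.
- move=> j Pj; have ne k : P k -> (j == k) = false.
    by move=> Pk; apply: contraNF Pj => /eqP ->.
  by rewrite /lam !ne // !mulr0 !addr0.
- have := sum_lam (fun=> 1); rewrite /= !mulr1 hs => <-.
  by apply: eq_bigr => j _; rewrite mulr1.
Qed.

Lemma in_hull_triangle (P : pred 'I_n) (p q r : 'I_n) x :
  P p -> P q -> P r -> 0 < orient (z p) (z q) (z r) ->
  0 <= orient (z q) (z r) x -> 0 <= orient (z r) (z p) x -> 0 <= orient (z p) (z q) x ->
  in_hull P x.
Proof.
move=> Pp Pq Pr hD h1 h2 h3.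
have [s1 e1 e2] := barycentric x (lt0r_neq0 hD).
by apply: (in_hull3 Pp Pq Pr _ _ _ s1 e1 e2); apply: divr_ge0 => //; exact: ltW.
Qed.

Lemma affine_combination lam (y : R * R) :
  \sum_j lam j = 1 -> y.1 = \sum_j lam j * (z j).1 -> y.2 = \sum_j lam j * (z j).2 ->
  forall al be ga : R,
    al * y.1 + be * y.2 + ga = \sum_j lam j * (al * (z j).1 + be * (z j).2 + ga).
Proof.
move=> hs h1 h2 al be ga; rewrite -[ga in LHS]mulr1 -hs h1 h2 !mulr_sumr -!big_split /=.
by apply: eq_bigr => j _; ring.
Qed.

Lemma orient_combination lam (y : R * R) :
  \sum_j lam j = 1 -> y.1 = \sum_j lam j * (z j).1 -> y.2 = \sum_j lam j * (z j).2 ->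
  forall a b, orient a b y = \sum_j lam j * orient a b (z j).
Proof.
move=> hs h1 h2 a b; rewrite orient_affine (affine_combination hs h1 h2).
by apply: eq_bigr => j _; rewrite orient_affine.
Qed.

Lemma extreme_inj : extreme -> injective z.
Proof.
move=> hz a b e; case: (eqVneq a b) => // hab; exfalso; apply: (hz a).
have hba : b != a by rewrite eq_sym.
by apply: (@in_hull3 _ b b b 1 0 0); rewrite ?ler01 ?lexx ?addr0 // e !mul0r !addr0 mul1r.
Qed.

(* Otherwise, of [z a] and [z b], the one closer to [z j0] would lie on the
   segment joining [z j0] to the other. *)
Lemma extreme_orient_neq0 j0 a b : extreme ->
  (forall k, k != j0 -> lex_lt (z j0) (z k)) ->
  a != j0 -> b != j0 -> a != b -> orient (z j0) (z a) (z b) != 0.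
Proof.
move=> hz hlex ha hb hab; apply/eqP => h0.
have [t [t0 t1 [[e1 e2]|[e1 e2]]]] := lex_orient_eq0 (hlex a ha) (hlex b hb) h0.
- apply: (hz b); apply: (@in_hull3 _ j0 a a (1 - t) t 0) => //;
    rewrite ?(eq_sym _ b) ?subr_ge0 ?lexx ?e1 ?e2 //; lra.
- apply: (hz a); apply: (@in_hull3 _ j0 b b (1 - t) t 0) => //;
    rewrite ?(eq_sym _ a) ?subr_ge0 ?lexx ?e1 ?e2 //; lra.
Qed.

End Hull.

Lemma exists_lex_min (R : realFieldType) n (z : 'I_n.+1 -> R * R) :
  exists j0, forall a, z a != z j0 -> lex_lt (z j0) (z a).
Proof.
have [j1 _ h1] := @arg_minP _ _ _ ord0 predT (fun i => (z i).1) isT.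
have [j0 /eqP e0 h0] :=
  @arg_minP _ _ _ j1 (fun i => (z i).1 == (z j1).1) (fun i => (z i).2) (eqxx _).
exists j0 => a; rewrite /lex_lt e0.
have := h1 a isT; rewrite le_eqVlt => /orP[/eqP e|->] // ha.
rewrite e ltxx eqxx /= lt_neqAle h0 ?andbT ?e //.
apply: contra ha => /eqP e2; apply/eqP; move: e0 e e2.
by case: (z a) (z j0) (z j1) => [? ?] [? ?] [? ?] /= -> -> ->.
Qed.

Lemma sorting_perm n (lt : rel 'I_n) :
  irreflexive lt -> transitive lt -> (forall a b, a != b -> lt a b || lt b a) ->
  exists s : {perm 'I_n}, forall i j : 'I_n, (i < j)%N -> lt (s i) (s j).
Proof.
move=> irr tr tot.
pose rk a := #|[set b | lt b a]|.
have rk_mono a b : lt a b -> (rk a < rk b)%N.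
  move=> ab; apply: proper_card; apply/properP; split.
    by apply/subsetP => c; rewrite !inE => /tr; apply.
  by exists a; rewrite !inE ?ab ?irr.
have rk_lt a : (rk a < n)%N.
  rewrite -[n]card_ord -cardsT; apply: proper_card; rewrite properT.
  by apply/negP => /eqP e; move: (in_setT a); rewrite -e inE irr.
have r_inj : injective (fun a => Ordinal (rk_lt a)).
  move=> a b /(congr1 val) /= e; apply/eqP; apply: contraT => ab.
  by case/orP: (tot a b ab) => /rk_mono; rewrite e ltnn.
exists (perm r_inj)^-1%g => i j ij.
have rkK k : rk ((perm r_inj)^-1%g k) = k.
  by have := congr1 val (permKV (perm r_inj) k); rewrite permE.
have ne : (perm r_inj)^-1%g i != (perm r_inj)^-1%g j.
  by rewrite (inj_eq perm_inj) neq_ltn ij.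
by case/orP: (tot _ _ ne) => // /rk_mono; rewrite !rkK ltnNge ltnW.
Qed.

(* Sorting the extreme points by angle around the lexicographically least one
   lists them in counterclockwise order. *)
Lemma extreme_cyclic_order (R : realFieldType) n (z : 'I_n -> R * R) : extreme z ->
  exists s : {perm 'I_n}, forall i j l : 'I_n, (i < j)%N -> (j < l)%N ->
    0 < orient (z (s i)) (z (s j)) (z (s l)).
Proof.
case: n z => [|n] z hz; first by exists 1%g => -[].
have [j0 hj0] := exists_lex_min z.
have hlex k : k != j0 -> lex_lt (z j0) (z k).
  by move=> hk; apply: hj0; rewrite (inj_eq (extreme_inj hz)).
pose ang a b := 0 < orient (z j0) (z a) (z b).
pose lt a b := ((a == j0) && (b != j0)) || [&& a != j0, b != j0 & ang a b].
have [s hs] : exists s : {perm 'I_n.+1}, forall i j : 'I_n.+1, (i < j)%N -> lt (s i) (s j).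
  apply: sorting_perm.
  - by move=> a; rewrite /lt /ang orient_self_r ltxx !andbF; case: eqP.
  - move=> b a c; rewrite /lt.
    case: (eqVneq a j0); case: (eqVneq b j0); case: (eqVneq c j0) => //= ? ? ?.
    exact: lex_orient_trans (hlex _ _) (hlex _ _) (hlex _ _).
  - move=> a b ab; rewrite /lt /ang.
    case: (eqVneq a j0) ab => [->|a0]; case: (eqVneq b j0) => [->|b0] //=; try by rewrite eqxx.
    move=> ab; rewrite orient_swap oppr_gt0 -neq_lt.
    by apply: extreme_orient_neq0; rewrite // eq_sym.
have lt_r a b : lt a b -> b != j0 by rewrite /lt; case: eqP => //= _; case/andP.
have lt_ang a b : a != j0 -> lt a b -> ang a b by rewrite /lt => /negbTE -> /and3P[].
exists s => i j l ij jl.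
have sij := hs _ _ ij; have sjl := hs _ _ jl; have sil := hs _ _ (ltn_trans ij jl).
have j0' := lt_r _ _ sij; have l0 := lt_r _ _ sjl.
case: (eqVneq (s i) j0) => [->|i0]; first exact: lt_ang _ _ j0' sjl.
rewrite ltNge; apply/negP => hle; apply: (hz (s j)).
have ne k : k != j -> s k != s j by rewrite (inj_eq perm_inj).
apply: (@in_hull_triangle _ _ _ _ j0 (s i) (s l)) => //.
- by rewrite eq_sym.
- by rewrite ne // neq_ltn ij.
- by rewrite ne // neq_ltn jl orbT.
- exact: lt_ang _ _ i0 sil.
- by rewrite orient_swap oppr_ge0.
- by rewrite orient_rot; exact: ltW (lt_ang _ _ j0' sjl).
- exact: ltW (lt_ang _ _ i0 sij).
Qed.

Section CyclicPolygon.
Variables (R : realFieldType) (K : nat) (v : 'I_K.+1 -> R * R).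
Hypothesis hK : (2 <= K)%N.
Hypothesis cyc : forall i j l : 'I_K.+1, (i < j)%N -> (j < l)%N ->
  0 < orient (v i) (v j) (v l).

Lemma ordS_val (i : 'I_K.+1) : (ordS i : nat) = if i == K :> nat then 0%N else i.+1.
Proof.
rewrite /ordS /=; case: eqP => [->|h]; first by rewrite modnn.
by rewrite modn_small //; have := ltn_ord i; lia.
Qed.

Lemma ordS_neq (i : 'I_K.+1) : ordS i != i.
Proof.
apply/negP => /eqP/(congr1 (@nat_of_ord _)); rewrite ordS_val; have := ltn_ord i.
by case: ifP => /eqP; lia.
Qed.

Lemma ordS2_neq (i : 'I_K.+1) : ordS (ordS i) != i.
Proof.
apply/negP => /eqP/(congr1 (@nat_of_ord _)); rewrite !ordS_val; have := ltn_ord i.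
by case: ifP => /eqP; case: ifP => /eqP; lia.
Qed.

Lemma orient_cyclic (i j l : 'I_K.+1) : [|| (i < j < l), (j < l < i) | (l < i < j)]%N ->
  0 < orient (v i) (v j) (v l).
Proof.
case/or3P => /andP[h1 h2]; first exact: cyc.
  by rewrite orient_rot; apply: cyc.
by rewrite -orient_rot; apply: cyc.
Qed.

Definition edge_form i (y : R * R) := orient (v i) (v (ordS i)) y.

Lemma edge_form_gt0 i j : j != i -> j != ordS i -> 0 < edge_form i (v j).
Proof.
move=> h1 h2; apply: orient_cyclic.
have h1' : j != i :> nat by []; have h2' : j != ordS i :> nat by [].
move: h1' h2'; rewrite ordS_val; have := ltn_ord i; have := ltn_ord j.
by case: ifP => /eqP; lia.
Qed.

Lemma edge_form_ge0 i j : 0 <= edge_form i (v j).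
Proof.
case: (eqVneq j i) => [->|h1]; first by rewrite /edge_form orient_self_l.
case: (eqVneq j (ordS i)) => [->|h2]; first by rewrite /edge_form orient_self_r.
exact: ltW (edge_form_gt0 h1 h2).
Qed.

Lemma polygon_extreme : extreme v.
Proof.
(* The two edge forms through [v j] add up to a function vanishing at [v j]
   and positive at every other vertex. *)
move=> j [lam [lam_ge0 lam_supp lam_sum h1 h2]].
pose g l := edge_form (ord_pred j) (v l) + edge_form j (v l).
have g_ge0 l : 0 <= g l by rewrite addr_ge0 ?edge_form_ge0.
have g_gt0 l : l != j -> 0 < g l.
  move=> lj; case: (eqVneq l (ordS j)) => [el|l1].
    apply: ltr_pwDl (edge_form_ge0 _ _); rewrite el edge_form_gt0 ?ord_predK ?ordS_neq //.
    by rewrite -{1}(ord_predK j) ordS2_neq.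
  exact: ltr_wpDl (edge_form_ge0 _ _) (edge_form_gt0 lj l1).
have gj0 : g j = 0 by rewrite /g /edge_form ord_predK orient_self_r orient_self_l addr0.
have : \sum_l lam l * g l = g j.
  rewrite /g /edge_form !(orient_combination lam_sum h1 h2).
  by rewrite -big_split /=; apply: eq_bigr => l _; rewrite mulrDr.
rewrite gj0 => /eqP; rewrite psumr_eq0 => [/allP lam_g0|l _]; last first.
  exact: mulr_ge0 (lam_ge0 l) (g_ge0 l).
have : \sum_l lam l = 0.
  apply: big1 => l _; case: (eqVneq l j) => [->|lj]; first by apply: lam_supp; rewrite eqxx.
  by move: (lam_g0 l (mem_index_enum l)); rewrite mulf_eq0 (gt_eqF (g_gt0 _ lj)) orbF => /eqP.
by rewrite lam_sum; move/eqP; rewrite oner_eq0.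
Qed.

(* Triangulate from [v ord0]: [y] lies in the first triangle
   [v ord0, v J, v J.+1] whose far side [v ord0, v J.+1] has [y] on its right. *)
Lemma in_hull_edge_forms y : (forall i, 0 <= edge_form i y) -> in_hull v predT y.
Proof.
move=> hy.
have ordS_inord (k : nat) : (k < K)%N -> ordS (inord k : 'I_K.+1) = inord k.+1.
  by move=> kK; apply: ord_inj; rewrite ordS_val /= !inordK ?ifF //; apply/eqP; lia.
pose P k := (0 < k)%N && (orient (v ord0) (v (inord k.+1)) y <= 0).
have PK : P K.-1.
  rewrite /P; apply/andP; split; first by lia.
  have -> : inord K.-1.+1 = ord_max :> 'I_K.+1 by apply: ord_inj; rewrite /= inordK; lia.
  have := hy ord_max; rewrite /edge_form.
  have -> : ordS ord_max = ord0 :> 'I_K.+1 by apply: ord_inj; rewrite ordS_val /= eqxx.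
  by rewrite orient_rot orient_swap oppr_ge0.
case: (ex_minnP (ex_intro P _ PK)) => J /andP[J0 hJ] Jmin.
have JK : (J < K)%N by have := Jmin _ PK; lia.
have ha : 0 <= orient (v ord0) (v (inord J)) y.
  case: (eqVneq J 1) => [->|J1].
    have -> : inord 1 = ordS ord0 :> 'I_K.+1.
      by apply: ord_inj; rewrite ordS_val inordK /=; [case: ifP => /eqP|]; lia.
    exact: hy ord0.
  have : ~~ P J.-1 by apply/negP => /Jmin; lia.
  by rewrite /P (_ : 0 < J.-1 = true)%N ?prednK //=; [rewrite -ltNge => /ltW | lia].
have hD : 0 < orient (v ord0) (v (inord J)) (v (inord J.+1)).
  by apply: cyc; rewrite /= !inordK //; lia.
apply: (in_hull_triangle _ _ _ hD) => //.
- by have := hy (inord J); rewrite /edge_form ordS_inord.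
- by rewrite orient_rot orient_swap oppr_ge0.
Qed.

(* The sum of the edge forms is twice the (constant) area of the polygon. *)
Lemma edge_form_sum_const y : \sum_i edge_form i y = \sum_i edge_form i (v ord0).
Proof.
have shift x : \sum_i edge_form i x = \sum_i ((v i).1 * (v (ordS i)).2 - (v i).2 * (v (ordS i)).1)
    + (\sum_i ((v (ordS i)).1 * x.2 - (v (ordS i)).2 * x.1)
       - \sum_i ((v i).1 * x.2 - (v i).2 * x.1)).
  by rewrite -sumrB -big_split /=; apply: eq_bigr => i _; rewrite /edge_form /orient; ring.
have rot x : \sum_i ((v (ordS i)).1 * x.2 - (v (ordS i)).2 * x.1) =
    \sum_i ((v i).1 * x.2 - (v i).2 * x.1).
  by rewrite [RHS](reindex_inj (@ordS_inj _)).
by rewrite !shift !rot !subrr.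
Qed.

Lemma edge_form_sum_gt0 : 0 < \sum_i edge_form i (v ord0).
Proof.
rewrite (bigD1 (ordS ord0)) //= ltr_pwDl ?sumr_ge0 // => [|i _]; last exact: edge_form_ge0.
by rewrite edge_form_gt0 // eq_sym ?ordS_neq ?ordS2_neq.
Qed.

(* Affine Farkas lemma for the polygon: with [q] a vertex minimising [g], the
   function [g - g (v q)] is a nonnegative combination of the two edge forms
   vanishing at [v q], and the constant [g (v q)] is a nonnegative multiple
   of their (constant) sum. *)
Lemma affine_nonneg_edge_comb (al be ga : R) :
  (forall l, 0 <= al * (v l).1 + be * (v l).2 + ga) ->
  exists lam : 'I_K.+1 -> R, (forall i, 0 <= lam i) /\
    forall y, al * y.1 + be * y.2 + ga = \sum_i lam i * edge_form i y.
Proof.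
pose g (y : R * R) := al * y.1 + be * y.2 + ga => g_ge0.
have [q _ q_min] := @arg_minP _ _ _ ord0 predT (fun l => g (v l)) isT.
pose p := ord_pred q; pose s := ordS q; pose C := \sum_i edge_form i (v ord0).
pose D := orient (v p) (v q) (v s).
have D_gt0 : 0 < D.
  have -> : D = edge_form p (v s) by rewrite /edge_form /p ord_predK.
  apply: edge_form_gt0.
    by rewrite /s -{1}(ord_predK q) ordS2_neq.
  by rewrite /s /p ord_predK ordS_neq.
have interp y : D * (g y - g (v q)) =
    (g (v p) - g (v q)) * edge_form q y + (g (v s) - g (v q)) * edge_form p y.
  by rewrite /D /g /edge_form /p /s ord_predK /orient; ring.
exists (fun i => (g (v p) - g (v q)) / D * (i == q)%:R
          + (g (v s) - g (v q)) / D * (i == p)%:R + g (v q) / C); split.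
  have coef_ge0 l : 0 <= (g (v l) - g (v q)) / D.
    by apply: divr_ge0; [rewrite subr_ge0; exact: q_min | exact: ltW].
  have const_ge0 : 0 <= g (v q) / C.
    by apply: divr_ge0; [exact: g_ge0 | exact: ltW edge_form_sum_gt0].
  move=> i; apply: addr_ge0 const_ge0.
  by apply: addr_ge0; apply: mulr_ge0 => //; exact: ler0n.
have sum_comb (c1 c2 c3 : R) F : \sum_i (c1 * (i == q)%:R + c2 * (i == p)%:R + c3) * F i
    = c1 * F q + c2 * F p + c3 * \sum_i F i.
  under eq_bigr do rewrite !mulrDl -!mulrA.
  by rewrite !big_split /= -!big_distrr /= !sumr_delta.
move=> y; rewrite sum_comb edge_form_sum_const -/C divfK ?lt0r_neq0 ?edge_form_sum_gt0 //.
have -> : (g (v p) - g (v q)) / D * edge_form q y + (g (v s) - g (v q)) / D * edge_form p y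
    = g y - g (v q).
  by rewrite -[RHS](mulKf (lt0r_neq0 D_gt0)) interp; field; exact: lt0r_neq0.
by rewrite /g; ring.
Qed.

End CyclicPolygon.

Section PlanarColumns.
Variable R : realType.

Definition cV_of_pair (p : R * R) : 'cV[R]_2 := \col_t (if t == ord0 then p.1 else p.2).
Definition pair_of_cV (x : 'cV[R]_2) : R * R := (x ord0 ord0, x ord_max ord0).

Lemma cV_of_pairK : cancel cV_of_pair pair_of_cV.
Proof. by case=> p1 p2; rewrite /pair_of_cV !mxE. Qed.

Lemma mulmx_cV2 m (A : 'M[R]_(m, 2)) (x : 'cV[R]_2) i :
  (A *m x) i ord0 = A i ord0 * x ord0 ord0 + A i ord_max * x ord_max ord0.
Proof. by rewrite mxE !big_ord_recl big_ord0 addr0; congr (_ + A i _ * x _ _); apply: ord_inj. Qed.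

Lemma in_conv_ofE n (w : 'I_n -> R * R) (P : pred 'I_n) (x : 'cV[R]_2) :
  in_conv_of (fun j => cV_of_pair (w j)) P x <-> in_hull w P (pair_of_cV x).
Proof.
have coord t lam : (\sum_j lam j *: cV_of_pair (w j)) t ord0 =
    \sum_j lam j * (if t == ord0 then (w j).1 else (w j).2).
  by rewrite summxE; apply: eq_bigr => j _; rewrite !mxE.
split=> [[lam [h0 hs hsum ->]]|[lam [h0 hs hsum e1 e2]]]; exists lam; split=> //.
- exact: coord.
- exact: coord.
- apply/matrixP => t u; rewrite (ord1 u) coord; move: e1 e2 => /= e1 e2.
  have [->|->] : t = ord0 \/ t = ord_max.
    by case: t => [[|[|//]] ht]; [left|right]; apply: ord_inj.
  + by rewrite e1; apply: eq_bigr.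
  + by rewrite e2; apply: eq_bigr.
Qed.

End PlanarColumns.

Section PolygonSlack.
Variables (R : realType) (K : nat) (v : 'I_K.+1 -> R * R).
Hypothesis hK : (2 <= K)%N.
Hypothesis cyc : forall i j l : 'I_K.+1, (i < j)%N -> (j < l)%N ->
  0 < orient (v i) (v j) (v l).

(* Row [i] of [edge_mx], [edge_rhs] is the inequality [edge_form v i y >= 0]. *)
Definition edge_mx : 'M[R]_(K.+1, 2) :=
  \matrix_(i, t) (if t == ord0 then (v (ordS i)).2 - (v i).2 else (v i).1 - (v (ordS i)).1).
Definition edge_rhs : 'cV[R]_K.+1 :=
  \col_i (((v (ordS i)).2 - (v i).2) * (v i).1 + ((v i).1 - (v (ordS i)).1) * (v i).2).
Definition vertex_cV j := cV_of_pair (v j).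

Lemma edge_slackE i x : edge_rhs i ord0 - (edge_mx *m x) i ord0 = edge_form v i (pair_of_cV x).
Proof. rewrite mulmx_cV2 !mxE /= /edge_form /orient /pair_of_cV /=; ring. Qed.

Lemma slack_matrix_polygonE i j : slack_matrix edge_mx edge_rhs vertex_cV i j = edge_form v i (v j).
Proof. by rewrite mxE edge_slackE cV_of_pairK. Qed.

Lemma tight_set_polygon i : tight_set edge_mx edge_rhs vertex_cV i = [set i; ordS i].
Proof.
apply/setP => l; rewrite !inE eq_sym -subr_eq0 edge_slackE cV_of_pairK.
case: (eqVneq l i) => [->|h1]; first by rewrite /edge_form orient_self_l eqxx.
case: (eqVneq l (ordS i)) => [->|h2]; first by rewrite /edge_form orient_self_r eqxx orbT.
by rewrite gt_eqF // edge_form_gt0.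
Qed.

Lemma polygon_convex_vertices : convex_polygon_vertices vertex_cV.
Proof.
split; first by lia.
by move=> j; rewrite in_conv_ofE cV_of_pairK; exact: polygon_extreme.
Qed.

Lemma polygon_facet_description : facet_description edge_mx edge_rhs vertex_cV.
Proof.
split.
- move=> x; rewrite in_conv_ofE; split.
  + case=> lam [lam_ge0 _ lam_sum e1 e2] i.
    rewrite -subr_ge0 edge_slackE /edge_form (orient_combination lam_sum e1 e2).
    by apply: sumr_ge0 => l _; rewrite mulr_ge0 ?edge_form_ge0.
  + by move=> hx; apply: in_hull_edge_forms => // i; rewrite -edge_slackE subr_ge0.
- by move=> i; rewrite tight_set_polygon cards2 eq_sym ordS_neq.
- move=> i i'; rewrite !tight_set_polygon => /setP e.
  have := e i; have := e (ordS i); rewrite !inE !eqxx orbT /=.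
  move=> /esym/orP[/eqP hS|/eqP/ordS_inj //] /esym/orP[/eqP //|/eqP hi].
  by move: (ordS2_neq hK i'); rewrite -hi hS eqxx.
Qed.

End PolygonSlack.

Section NonnegRank.
Variable R : realType.

Lemma nonneg_mx_mul m k n (A : 'M[R]_(m, k)) (B : 'M[R]_(k, n)) :
  nonneg_mx A -> nonneg_mx B -> nonneg_mx (A *m B).
Proof. by move=> hA hB i j; rewrite mxE sumr_ge0 // => l _; rewrite mulr_ge0. Qed.

Lemma nonneg_mx1 n : nonneg_mx (1%:M : 'M[R]_n).
Proof. by move=> i j; rewrite mxE; case: (i == j). Qed.

Lemma nonneg_rank_le m n (X : 'M[R]_(m, n)) r : nonneg_fact X r -> (nonneg_rank X <= r)%N.
Proof.
move=> h; rewrite /nonneg_rank; case: pselect => [ex|//].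
by case: ex_minnP => r0 _; apply; exact/asboolP.
Qed.

Lemma nonneg_rank_le_cols m n (X : 'M[R]_(m, n)) : nonneg_mx X -> (nonneg_rank X <= n)%N.
Proof.
by move=> hX; apply: nonneg_rank_le; exists X, 1%:M; rewrite mulmx1; split=> //; exact: nonneg_mx1.
Qed.

Lemma nonneg_rank_fact m n (X : 'M[R]_(m, n)) : nonneg_mx X -> nonneg_fact X (nonneg_rank X).
Proof.
move=> hX; rewrite /nonneg_rank; case: pselect => [ex|nex].
  by case: ex_minnP => r0 /asboolP.
by exfalso; apply: nex; exists n, X, 1%:M; rewrite mulmx1; split=> //; exact: nonneg_mx1.
Qed.

Lemma nonneg_rank_mulmxr m k n (X : 'M[R]_(m, k)) (A : 'M[R]_(k, n)) :
  nonneg_mx X -> nonneg_mx A -> (nonneg_rank (X *m A) <= nonneg_rank X)%N.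
Proof.
move=> hX hA; have [W [H [hW hH eX]]] := nonneg_rank_fact hX.
apply: nonneg_rank_le; exists W, (H *m A); split=> //; first exact: nonneg_mx_mul.
by rewrite mulmxA -eX.
Qed.

Lemma nonneg_rank_mulmxl m k n (A : 'M[R]_(m, k)) (X : 'M[R]_(k, n)) :
  nonneg_mx X -> nonneg_mx A -> (nonneg_rank (A *m X) <= nonneg_rank X)%N.
Proof.
move=> hX hA; have [W [H [hW hH eX]]] := nonneg_rank_fact hX.
apply: nonneg_rank_le; exists (A *m W), H; split=> //; first exact: nonneg_mx_mul.
by rewrite -mulmxA -eX.
Qed.

Lemma nonneg_rank_le_tr m n (X : 'M[R]_(m, n)) :
  nonneg_mx X -> (nonneg_rank X^T <= nonneg_rank X)%N.
Proof.
move=> hX; have [W [H [hW hH eX]]] := nonneg_rank_fact hX.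
apply: nonneg_rank_le; exists H^T, W^T; split; try by move=> i j; rewrite mxE.
by rewrite -trmx_mul -eX.
Qed.

Lemma nonneg_rank_tr m n (X : 'M[R]_(m, n)) : nonneg_mx X -> nonneg_rank X^T = nonneg_rank X.
Proof.
move=> hX; have hXT : nonneg_mx X^T by move=> i j; rewrite mxE.
apply: anti_leq; rewrite nonneg_rank_le_tr //=.
by have := nonneg_rank_le_tr hXT; rewrite trmxK.
Qed.

End NonnegRank.

Section Reduction.
Variable R : realType.

Definition redundant_col m n (X : 'M[R]_(m, n)) := exists j (c : 'I_n -> R),
  [/\ forall l, 0 <= c l, c j = 0 & forall i, X i j = \sum_l c l * X i l].

(* [X *m S] deletes the redundant column [j], and [B] rebuilds it. *)
Lemma redundant_col_factor m n (X : 'M[R]_(m, n.+1)) : redundant_col X ->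
  exists (S : 'M[R]_(n.+1, n)) (B : 'M[R]_(n, n.+1)),
    [/\ nonneg_mx S, nonneg_mx B & X = X *m S *m B].
Proof.
case=> j [c [c_ge0 cj0 Xj]].
pose S : 'M[R]_(n.+1, n) := \matrix_(l', l) (l' == lift j l)%:R.
pose B : 'M[R]_(n, n.+1) :=
  \matrix_(l, j') (if j' == j then c (lift j l) else (lift j l == j')%:R).
have XSE i l : (X *m S) i l = X i (lift j l).
  by rewrite mxE; under eq_bigr do rewrite mxE mulrC; exact: sumr_delta.
exists S, B; split.
- by move=> l' l; rewrite mxE ler0n.
- by move=> l j'; rewrite mxE; case: ifP => _ //; exact: ler0n.
apply/matrixP => i j'; rewrite mxE; under eq_bigr do rewrite XSE mxE.
case: (eqVneq j' j) => [->|j'j].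
- rewrite Xj (bigD1_ord j) //= cj0 mul0r add0r.
  by apply: eq_bigr => l _; rewrite mulrC.
- rewrite -[LHS](sumr_delta j' (X i)) (bigD1_ord j) //= eq_sym (negbTE j'j) mul0r add0r.
  by apply: eq_bigr => l _; rewrite mulrC.
Qed.

Lemma col_sum_gt0 m n (X : 'M[R]_(m, n)) : nonneg_mx X -> ~ redundant_col X ->
  forall j, 0 < \sum_i X i j.
Proof.
move=> hX hred j; rewrite lt0r sumr_ge0 ?andbT; last by move=> i _; exact: hX.
apply/negP => /eqP s0; apply: hred; exists j, (fun _ => 0); split => // i.
rewrite big1 => [|l _]; last by rewrite mul0r.
exact: (psumr_eq0P (fun i _ => hX i j)) s0 i isT.
Qed.

Lemma sum_ord3 (F : 'I_3 -> R) (k : 'I_3) :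
  \sum_t F t = F k + F (lift k ord0) + F (lift k ord_max).
Proof.
rewrite (bigD1_ord k) //= big_ord_recl big_ord1 addrA.
by congr (_ + F (lift k _) + F (lift k _)); apply: ord_inj.
Qed.

(* Scaled to unit column sums, the columns of [V] lie on the affine plane
   [phi w = 1], where [phi] holds the column sums of [U]; two coordinates
   [z j] parametrise that plane. *)
Lemma rank3_affine_repr m n (X : 'M[R]_(m, n)) (U : 'M[R]_(m, 3)) (V : 'M[R]_(3, n)) :
  X = U *m V -> (forall j, \sum_i X i j != 0) ->
  exists (z : 'I_n -> R * R) (al be ga : 'I_m -> R), forall i j,
    X i j = (\sum_i' X i' j) * (al i * (z j).1 + be i * (z j).2 + ga i).
Proof.
case: n X V => [|n] X V eX s_neq0.
  by exists (fun=> (0, 0)), (fun=> 0), (fun=> 0), (fun=> 0); move=> i [].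
pose s j := \sum_i X i j; pose phi t := \sum_i U i t.
have {}s_neq0 j : s j != 0 := s_neq0 j.
have s_phi j : \sum_t phi t * V t j = s j.
  under eq_bigr do rewrite big_distrl /=.
  by rewrite exchange_big /=; apply: eq_bigr => i _; rewrite eX mxE.
have [k phik] : exists k, phi k != 0.
  apply/existsP; apply: contraT => /existsPn phi0; have := s_phi ord0.
  rewrite big1 => [s0|t _]; last by rewrite (eqP (negbNE (phi0 t))) mul0r.
  by have := s_neq0 ord0; rewrite -s0 eqxx.
pose W t j := V t j / s j.
have W_aff j : \sum_t phi t * W t j = 1.
  rewrite -[1](divff (s_neq0 j)) -{1}s_phi mulr_suml.
  by apply: eq_bigr => t _; rewrite mulrA.
pose l0 := lift k ord0; pose l1 := lift k (ord_max : 'I_2).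
exists (fun j => (W l0 j, W l1 j)), (fun i => U i l0 - U i k * phi l0 / phi k),
  (fun i => U i l1 - U i k * phi l1 / phi k), (fun i => U i k / phi k).
move=> i j /=.
have Wk : W k j = (1 - phi l0 * W l0 j - phi l1 * W l1 j) / phi k.
  by have := W_aff j; rewrite (sum_ord3 _ k) -/l0 -/l1 => <-; field.
have -> : X i j = s j * \sum_t U i t * W t j.
  rewrite eX mxE mulr_sumr; apply: eq_bigr => t _; rewrite /W; field; exact: s_neq0.
by rewrite -/(s j) (sum_ord3 _ k) -/l0 -/l1 Wk; field.
Qed.

Lemma irredundant_extreme m n (X : 'M[R]_(m, n)) (s : 'I_n -> R) (z : 'I_n -> R * R)
    (al be ga : 'I_m -> R) :
  (forall j, 0 < s j) -> (forall i j, X i j = s j * (al i * (z j).1 + be i * (z j).2 + ga i)) ->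
  ~ redundant_col X -> extreme z.
Proof.
move=> s_gt0 eX hred j [lam [lam_ge0 lam_supp lam_sum e1 e2]]; apply: hred.
exists j, (fun l => lam l * s j / s l); split.
- by move=> l; apply: divr_ge0; [apply: mulr_ge0 => //|]; exact: ltW.
- by rewrite lam_supp ?eqxx // !mul0r.
- move=> i; rewrite eX (affine_combination lam_sum e1 e2) mulr_sumr.
  by apply: eq_bigr => l _; rewrite eX; field; exact: lt0r_neq0.
Qed.

Definition slack_rank_bound :=
  forall (n m : nat) (v : 'I_n -> 'cV[R]_2) (A : 'M[R]_(m, 2)) (b : 'cV[R]_m),
    (3 <= n)%N -> convex_polygon_vertices v -> facet_description A b v ->
    (nonneg_rank (slack_matrix A b v) <= (n + 6) %/ 2)%N.

(* Each row of [X] is a nonnegative affine function at the vertices, hence a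
   nonnegative combination of the rows of the slack matrix. *)
Lemma nonneg_rank_le_slack_bound K m (X : 'M[R]_(m, K.+1)) (s : 'I_K.+1 -> R)
    (z : 'I_K.+1 -> R * R) (al be ga : 'I_m -> R) :
  slack_rank_bound -> (2 <= K)%N -> nonneg_mx X -> (forall j, 0 < s j) ->
  (forall i j, X i j = s j * (al i * (z j).1 + be i * (z j).2 + ga i)) -> extreme z ->
  (nonneg_rank X <= (K.+1 + 6) %/ 2)%N.
Proof.
move=> hbound hK hX s_gt0 eX hz.
have [sg cyc] := extreme_cyclic_order hz; pose v l := z (sg l).
pose S := slack_matrix (edge_mx v) (edge_rhs v) (vertex_cV v).
have S_ge0 : nonneg_mx S by move=> i l; rewrite slack_matrix_polygonE edge_form_ge0.
have [Lam Lam_ge0 eLam] : exists2 Lam : 'M[R]_(m, K.+1), nonneg_mx Lam &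
    forall i y, al i * y.1 + be i * y.2 + ga i = \sum_q Lam i q * edge_form v q y.
  have row i : exists lam : 'I_K.+1 -> R, (forall q, 0 <= lam q) /\
      forall y, al i * y.1 + be i * y.2 + ga i = \sum_q lam q * edge_form v q y.
    by apply: (affine_nonneg_edge_comb hK cyc) => l; rewrite -(pmulr_rge0 _ (s_gt0 (sg l))) -eX.
  have [f hf] := choice row.
  exists (\matrix_(i, q) f i q) => [i q|i y]; first by rewrite mxE; exact: (proj1 (hf i)).
  by rewrite (proj2 (hf i)); apply: eq_bigr => q _; rewrite mxE.
pose Bs : 'M[R]_(K.+1, K.+1) := \matrix_(l, j) ((sg l == j)%:R * s j).
have Bs_ge0 : nonneg_mx Bs by move=> l j; rewrite mxE; apply: mulr_ge0 (ltW (s_gt0 j)).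
have -> : X = Lam *m (S *m Bs).
  apply/matrixP => i j; rewrite mulmxA mxE (bigD1 ((sg^-1)%g j)) //= big1 ?addr0.
  - rewrite [Bs _ _]mxE permKV eqxx mul1r eX mulrC eLam mxE; congr (_ * _).
    by apply: eq_bigr => q _; rewrite slack_matrix_polygonE /v permKV.
  - move=> l hl; rewrite [Bs _ _]mxE; have -> : (sg l == j) = false.
      by apply: contraNF hl => /eqP <-; rewrite permK.
    by rewrite mul0r mulr0.
apply: leq_trans (nonneg_rank_mulmxl (nonneg_mx_mul S_ge0 Bs_ge0) Lam_ge0) _.
apply: leq_trans (nonneg_rank_mulmxr S_ge0 Bs_ge0) _.
apply: hbound; [lia | exact: polygon_convex_vertices | exact: polygon_facet_description].
Qed.

Lemma nonneg_rank_rank3 n m (X : 'M[R]_(m, n)) (U : 'M[R]_(m, 3)) (V : 'M[R]_(3, n)) :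
  slack_rank_bound -> nonneg_mx X -> X = U *m V -> (nonneg_rank X <= (n + 6) %/ 2)%N.
Proof.
move=> hbound; elim: n X V => [|n IH] X V hX eX.
  exact: leq_trans (nonneg_rank_le_cols hX) _.
have [hred|hirr] := pselect (redundant_col X).
  have [S [B [S_ge0 B_ge0 eSB]]] := redundant_col_factor hred.
  have XS_ge0 := nonneg_mx_mul hX S_ge0.
  rewrite eSB; apply: leq_trans (nonneg_rank_mulmxr XS_ge0 B_ge0) _.
  apply: leq_trans (IH _ (V *m S) XS_ge0 _) _; first by rewrite eX mulmxA.
  by apply: leq_div2r; lia.
have [small|large] := leqP n.+1 6.
  by apply: leq_trans (nonneg_rank_le_cols hX) _; lia.
have s_gt0 := col_sum_gt0 hX hirr.
have [z [al [be [ga eXz]]]] := rank3_affine_repr eX (fun j => lt0r_neq0 (s_gt0 j)).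
apply: (nonneg_rank_le_slack_bound hbound _ hX s_gt0 eXz); first by lia.
exact: irredundant_extreme s_gt0 eXz hirr.
Qed.

End Reduction.

Theorem mainTheorem1 (R : realType) :
  (forall (n m : nat) (v : 'I_n -> 'cV[R]_2) (A : 'M[R]_(m, 2)) (b : 'cV[R]_m),
      (3 <= n)%N -> convex_polygon_vertices v -> facet_description A b v ->
      (nonneg_rank (slack_matrix A b v) <= (n + 6) %/ 2)%N) ->
  forall (m n : nat) (X : 'M[R]_(m, n)),
    nonneg_mx X -> \rank X = 3%N ->
    (nonneg_rank X <= (minn m n + 6) %/ 2)%N.
Proof.
move=> hbound m n X hX rkX.
have [U [V eX]] : exists (U : 'M[R]_(m, 3)) (V : 'M[R]_(3, n)), X = U *m V.
  by move: (mulmx_base X); move: (col_base X) (row_base X); rewrite rkX => U V <-; exists U, V.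
have hXT : nonneg_mx X^T by move=> i j; rewrite mxE.
(* [leqP] also rewrites [minn m n] to [m] or [n]. *)
case: (leqP m n) => _; last exact: nonneg_rank_rank3 hbound hX eX.
rewrite -nonneg_rank_tr //; apply: (nonneg_rank_rank3 (U := V^T) (V := U^T) hbound hXT).
by rewrite eX trmx_mul.
Qed.
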